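(* Let $\mathcal T_{\mathcal I}$ be a cluster tree in which every non-leaf cluster has exactly two sons, and let $(V_t)_{t\in\mathcal T_{\mathcal I}}$ be a nested cluster basis of rank $k$ with transfer matrices $(E_t)$, i.e. $V_{t|\hat t'\times k}=V_{t'}E_{t'}$ for all $t'\in\mathrm{sons}(t)$. Let $(Q_t)_{t\in\mathcal T_{\mathcal I}}$ be constructed as follows: for leaves $t$, $Q_t\in\mathbb{R}^{\hat t\times k_t}$ is any matrix with orthonormal columns, and we set $\widehat Q_t:=Q_t$, $\widehat V_t:=V_t$; for a non-leaf $t$ with sons $t_1,t_2$, set $U_t:=\begin{pmatrix}Q_{t_1}&0\\0&Q_{t_2}\end{pmatrix}$, $\widehat V_t:=U_t^TV_t$, choose $\widehat Q_t\in\mathbb{R}^{(k_{t_1}+k_{t_2})\times k_t}$ with orthonormal columns, and set $Q_t:=U_t\widehat Q_t$. Let $t_0\in\mathcal T_{\mathcal I}$, $N\in\mathbb N$, and let $(M_r)_{r\in\mathrm{sons}^*(t_0)}$ be matrices $M_r\in\mathbb{R}^{k\times N}$ satisfying $M_{r'}=E_{r'}M_r$ for all $r\in\mathrm{sons}^*(t_0)$ and $r'\in\mathrm{sons}(r)$. Then $$\|Q_{t_0}Q_{t_0}^TV_{t_0}M_{t_0}-V_{t_0}M_{t_0}\|_F^2=\sum_{r\in\mathrm{sons}^*(t_0)}\|\widehat Q_r\widehat Q_r^T\widehat V_rM_r-\widehat V_rM_r\|_F^2.$$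
   Context: A cluster tree for a finite index set $\mathcal I$ is a tree whose nodes $t$ are labeled by subsets $\hat t\subseteq\mathcal I$, the root being labeled $\mathcal I$ and the labels of the sons of a non-leaf node forming a disjoint partition of its label. $\mathrm{sons}^*(t)$ denotes the set of descendants of $t$ including $t$ itself: $\mathrm{sons}^*(t)=\{t\}$ if $t$ is a leaf and $\{t\}\cup\bigcup_{t'\in\mathrm{sons}(t)}\mathrm{sons}^*(t')$ otherwise. $\|\cdot\|_F$ is the Frobenius norm. *)

From HB Require Import structures.
From mathcomp Require Import all_boot all_order all_algebra.
Set Implicit Arguments. Unset Strict Implicit. Unset Printing Implicit Defensive.
Import Order.TTheory GRing.Theory Num.Theory.
Local Open Scope ring_scope.

Section Defs.
Variables (n : nat) (Node : finType).
Variable sons : Node -> option (Node * Node).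

Definition sonrel : rel Node := fun t t' =>
  if sons t is Some (a, b) then (t' == a) || (t' == b) else false.

Definition sons_star (t0 : Node) : {set Node} := [set r | connect sonrel t0 r].

Definition is_bin_cluster_tree (root : Node) (lbl : Node -> {set 'I_n}) : Prop :=
  [/\ lbl root = [set: 'I_n],
      forall t, connect sonrel root t,
      [set t | sonrel t root] = set0,
      forall t', t' != root -> #|[set t | sonrel t t']| = 1%N &
      forall t a b, sons t = Some (a, b) ->
        [/\ a != b, lbl a :&: lbl b = set0 & lbl a :|: lbl b = lbl t]].

(* A matrix in R^{s x m}, s a subset of 'I_n, is encoded as an n x m matrix
   whose rows outside s vanish (extension by zero). *)
Definition supported (R : nzRingType) m (s : {set 'I_n}) (X : 'M[R]_(n, m)) : Prop :=
  forall i, i \notin s -> row i X = 0.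

Variable kt : Node -> nat.

(* row dimension of \hat Q_t : k_{t1} + k_{t2} for non-leaves, \hat t for leaves *)
Definition rowdim_of (o : option (Node * Node)) : nat :=
  if o is Some p then (kt p.1 + kt p.2)%N else n.
Definition rowdim (t : Node) : nat := rowdim_of (sons t).

(* U_t = blockdiag(Q_{t1}, Q_{t2}) for non-leaves; the identity for leaves
   (so that \hat Q_t = Q_t and \hat V_t = V_t there). *)
Definition Umx (R : nzRingType) (Q : forall t, 'M[R]_(n, kt t)) (t : Node)
  : 'M[R]_(n, rowdim t) :=
  match sons t as o return 'M[R]_(n, rowdim_of o) with
  | Some p => row_mx (Q p.1) (Q p.2)
  | None => 1%:M
  end.

End Defs.

Definition frob2 (R : nzRingType) m p (A : 'M[R]_(m, p)) : R :=
  \sum_(i < m) \sum_(j < p) A i j ^+ 2.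

From HB Require Import structures.
From mathcomp Require Import all_boot all_order all_algebra.
Set Implicit Arguments. Unset Strict Implicit. Unset Printing Implicit Defensive.
Import Order.TTheory GRing.Theory Num.Theory.
Local Open Scope ring_scope.

(** The matrix U_t has orthonormal columns and Q_t = U_t \hat Q_t, so the error
    of projecting X onto the range of Q_t splits orthogonally into the error of
    projecting U_t^T X onto the range of \hat Q_t plus the error of projecting X
    onto the range of U_t.  At a leaf U_t is the identity and the second error
    vanishes.  At a non-leaf t with sons t1, t2, nestedness gives
    V_t M_t = V_{t1} M_{t1} + V_{t2} M_{t2}, the two summands and Q_{t1}, Q_{t2}
    live on the disjoint row sets t1, t2, and the second error is the sum of the
    projection errors at the sons. *)

Section ConnectSteps.
Variables (T : finType) (e : rel T).

Lemma connect_first_step x y :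
  connect e x y -> x = y \/ exists2 z, e x z & connect e z y.
Proof.
case/connectP=> [[|z p]] /=; first by left.
by case/andP=> xz zp ->; right; exists z => //; apply/connectP; exists p.
Qed.

Lemma connect_last_step x y :
  connect e x y -> x != y -> exists2 u, connect e x u & e u y.
Proof.
case/connectP=> p; elim/last_ind: p => [|p z _] /=; first by move=> _ ->; rewrite eqxx.
rewrite rcons_path last_rcons => /andP[xp pz] -> _.
by exists (last x p) => //; apply/connectP; exists p.
Qed.

End ConnectSteps.

Section BinaryClusterTree.
Variables (Node : finType) (sons : Node -> option (Node * Node)).
Local Notation son := (sonrel sons).
Local Notation desc := (sons_star sons).

Lemma sonrel_sons t a b : sons t = Some (a, b) -> son t a /\ son t b.
Proof. by rewrite /sonrel => ->; rewrite !eqxx orbT. Qed.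

Lemma sons_star_leaf t : sons t = None -> desc t = [set t].
Proof.
move=> tleaf; apply/setP=> r; rewrite !inE; apply/idP/eqP=> [|<-]; last exact: connect0.
by case/connect_first_step=> [//|[z]]; rewrite /sonrel tleaf.
Qed.

Lemma sons_star_node t a b :
  sons t = Some (a, b) -> desc t = t |: (desc a :|: desc b).
Proof.
move=> tab; have [ta tb] := sonrel_sons tab.
apply/setP=> r; rewrite !inE; apply/idP/idP.
  case/connect_first_step=> [->|[z]]; first by rewrite eqxx.
  by rewrite /sonrel tab => /orP[]/eqP-> ->; rewrite ?orbT.
case/or3P=> [/eqP->|ar|br]; first exact: connect0.
  exact: connect_trans (connect1 ta) ar.
exact: connect_trans (connect1 tb) br.
Qed.

Lemma sons_star_son t r r' : r \in desc t -> son r r' -> r' \in desc t.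
Proof. by rewrite !inE => tr rr'; apply: connect_trans tr (connect1 rr'). Qed.

Variables (n : nat) (root : Node) (lbl : Node -> {set 'I_n}).
Hypothesis treeT : is_bin_cluster_tree sons root lbl.

Lemma lbl_sons_disjoint t a b : sons t = Some (a, b) -> [disjoint lbl a & lbl b].
Proof. by case: treeT => _ _ _ _ /[apply] -[_ /eqP]; rewrite setI_eq0. Qed.

Lemma lbl_sons_cover t a b : sons t = Some (a, b) -> lbl a :|: lbl b = lbl t.
Proof. by case: treeT => _ _ _ _ /[apply] -[]. Qed.

Lemma sonrel_root t : ~~ son t root.
Proof. by case: treeT => _ _ no_parent _ _; have := in_set0 t; rewrite -no_parent inE => ->. Qed.

Lemma sonrel_parent_uniq u u' w : son u w -> son u' w -> u = u'.
Proof.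
case: treeT => _ _ _ one_parent _ uw u'w.
have wNroot : w != root by apply: contraTneq uw => ->; apply: sonrel_root.
have /eqP/cards1P[x parents] := one_parent w wNroot.
have parentP v : son v w -> v = x by move=> vw; apply/set1P; rewrite -parents inE.
by rewrite (parentP _ uw) (parentP _ u'w).
Qed.

Lemma sonrel_acyclic x y : son x y -> ~~ connect son y x.
Proof.
(* Lying on a cycle through one's parent passes to ancestors, and the root has no parent. *)
pose on_cycle w := exists2 u, son u w & connect son w u.
have on_cycle_parent v w : son v w -> on_cycle w -> on_cycle v.
  move=> vw [u uw wu]; rewrite (sonrel_parent_uniq uw vw) in wu.
  have [wv|wNv] := eqVneq w v; first by subst w; exists v; rewrite ?connect0.
  have [u' wu' u'v] := connect_last_step wu wNv.
  by exists u' => //; apply: connect_trans (connect1 vw) wu'.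
have on_cycle_ancestor v w : connect son v w -> on_cycle w -> on_cycle v.
  case/connectP=> p; elim: p v => [|z p IHp] v /=; first by move=> _ ->.
  by case/andP=> vz zp wp cw; apply: on_cycle_parent vz (IHp z zp wp cw).
move=> xy; apply/negP=> yx; case: treeT => _ reach _ _ _.
have [u uroot _] := on_cycle_ancestor _ _ (reach y) (ex_intro2 _ _ x xy yx).
by move: (sonrel_root u); rewrite uroot.
Qed.

Lemma connect_ancestors_total x y z :
  connect son x z -> connect son y z -> connect son x y || connect son y x.
Proof.
case/connectP=> p; elim/last_ind: p z => [|p z IHp] z' /=.
  by move=> _ -> ->; rewrite orbT.
rewrite rcons_path last_rcons => /andP[xp pz] -> yz.
have [->|yNz] := eqVneq y z.
  by apply/orP; left; apply/connectP; exists (rcons p z); rewrite ?rcons_path ?xp ?last_rcons.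
have [u yu uz] := connect_last_step yz yNz.
rewrite (sonrel_parent_uniq uz pz) in yu.
exact: IHp xp erefl yu.
Qed.

Lemma sons_star_disjoint t a b : sons t = Some (a, b) -> [disjoint desc a & desc b].
Proof.
move=> tab; have [ta tb] := sonrel_sons tab.
have aNb : a != b by case: treeT => _ _ _ _ /(_ _ _ _ tab)[].
have no_path x y : son t x -> son t y -> x != y -> ~~ connect son x y.
  move=> tx ty xNy; apply/negP=> xy; have [u xu uy] := connect_last_step xy xNy.
  by move: (sonrel_acyclic tx); rewrite -(sonrel_parent_uniq uy ty) xu.
rewrite -setI_eq0; apply/eqP/setP=> r; rewrite !inE; apply/negbTE/negP=> /andP[ar br].
case/orP: (connect_ancestors_total ar br); apply/negP; first exact: no_path.
by apply: no_path; rewrite // eq_sym.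
Qed.

Lemma card_sons_star_son t a : son t a -> (#|desc a| < #|desc t|)%N.
Proof.
move=> ta; apply/proper_card/properP; split.
  by apply/subsetP=> r; rewrite !inE; apply: connect_trans (connect1 ta).
by exists t; rewrite !inE ?connect0 ?sonrel_acyclic.
Qed.

Lemma sonrel_ind (P : Node -> Prop) :
  (forall t, (forall t', son t t' -> P t') -> P t) -> forall t, P t.
Proof.
move=> IHson t; elim: {t}_.+1 {-2}t (ltnSn #|desc t|) => // m IHm t desc_t.
by apply: IHson => t' tt'; apply: IHm; apply: leq_trans (card_sons_star_son tt') _.
Qed.

Lemma big_sons_star_node (V : nmodType) (F : Node -> V) t a b :
  sons t = Some (a, b) ->
  \sum_(r in desc t) F r = F t + (\sum_(r in desc a) F r + \sum_(r in desc b) F r).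
Proof.
move=> tab; have [ta tb] := sonrel_sons tab.
rewrite (sons_star_node tab) big_setU1 /=; last first.
  by rewrite in_setU !inE (negbTE (sonrel_acyclic ta)) (negbTE (sonrel_acyclic tb)).
by rewrite (eq_bigl [predU desc a & desc b]) ?bigU ?(sons_star_disjoint tab) // => r; rewrite !inE.
Qed.

End BinaryClusterTree.

Section FrobeniusProjection.
Variable R : comNzRingType.

Lemma tr_mulmx_eq0C m p q (A : 'M[R]_(m, p)) (B : 'M[R]_(m, q)) :
  A^T *m B = 0 -> B^T *m A = 0.
Proof. by move=> AB0; rewrite -[A]trmxK -trmx_mul AB0 trmx0. Qed.

Lemma frob2_trace m p (A : 'M[R]_(m, p)) : frob2 A = \tr (A^T *m A).
Proof.
rewrite /frob2 /mxtrace exchange_big; apply: eq_bigr => j _.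
by rewrite !mxE; apply: eq_bigr => i _; rewrite !mxE expr2.
Qed.

Lemma frob2D_orth m p (A B : 'M[R]_(m, p)) :
  A^T *m B = 0 -> frob2 (A + B) = frob2 A + frob2 B.
Proof.
move=> AB0; rewrite !frob2_trace [(A + B)^T]linearD /= mulmxDl !mulmxDr AB0 (tr_mulmx_eq0C AB0).
by rewrite addr0 add0r mxtraceD.
Qed.

Lemma frob2_isometry m q p (U : 'M[R]_(m, q)) (D : 'M[R]_(q, p)) :
  U^T *m U = 1%:M -> frob2 (U *m D) = frob2 D.
Proof. by move=> UU1; rewrite !frob2_trace trmx_mul mulmxA -(mulmxA D^T) UU1 mulmx1. Qed.

Lemma row_mx_orthonormal m ka kb (A : 'M[R]_(m, ka)) (B : 'M[R]_(m, kb)) :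
  A^T *m A = 1%:M -> B^T *m B = 1%:M -> A^T *m B = 0 ->
  (row_mx A B)^T *m row_mx A B = 1%:M.
Proof.
move=> AA1 BB1 AB0.
by rewrite tr_row_mx mul_col_row AA1 BB1 AB0 (tr_mulmx_eq0C AB0) -scalar_mx_block.
Qed.

Definition proj_err m q p (P : 'M[R]_(m, q)) (X : 'M[R]_(m, p)) : R :=
  frob2 (P *m P^T *m X - X).

Lemma proj_err1 m p (X : 'M[R]_(m, p)) : proj_err 1%:M X = 0.
Proof.
by rewrite /proj_err trmx1 mulmx1 mul1mx subrr frob2_trace trmx0 mul0mx mxtrace0.
Qed.

Lemma proj_err_mulmx m q r p (U : 'M[R]_(m, q)) (W : 'M[R]_(q, r)) (X : 'M[R]_(m, p)) :
  U^T *m U = 1%:M -> proj_err (U *m W) X = proj_err W (U^T *m X) + proj_err U X.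
Proof.
move=> UU1; rewrite /proj_err.
set D := W *m W^T *m (U^T *m X) - U^T *m X.
have -> : U *m W *m (U *m W)^T *m X - X = U *m D + (U *m U^T *m X - X).
  by rewrite /D mulmxBr trmx_mul !mulmxA addrA subrK.
rewrite frob2D_orth ?frob2_isometry //.
rewrite trmx_mul -mulmxA mulmxBr !mulmxA -(mulmxA D^T U^T U) UU1 mulmx1.
by rewrite subrr.
Qed.

Lemma supported_mulmx n m p (s : {set 'I_n}) (A : 'M[R]_(n, m)) (B : 'M[R]_(m, p)) :
  supported s A -> supported s (A *m B).
Proof. by move=> sA i /sA; rewrite row_mul => ->; rewrite mul0mx. Qed.

Lemma supportedB n p (s : {set 'I_n}) (A B : 'M[R]_(n, p)) :
  supported s A -> supported s B -> supported s (A - B).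
Proof. by move=> sA sB i iNs; rewrite linearB /= sA // sB // subrr. Qed.

Lemma supported_disjoint_orth n m p (s s' : {set 'I_n})
    (A : 'M[R]_(n, m)) (B : 'M[R]_(n, p)) :
  supported s A -> supported s' B -> [disjoint s & s'] -> A^T *m B = 0.
Proof.
move=> sA sB ss'; apply/matrixP=> i j; rewrite !mxE big1 // => l _; rewrite mxE.
have entry0 q (C : 'M[R]_(n, q)) c : row l C = 0 -> C l c = 0.
  by move/(congr1 (fun r : 'rV_q => r 0 c)); rewrite !mxE.
have [ls|lNs] := boolP (l \in s); last by rewrite (entry0 _ _ _ (sA l lNs)) mul0r.
by rewrite (entry0 _ _ _ (sB l _)) ?mulr0 ?(disjointFr ss' ls).
Qed.

Lemma proj_err_row_mx n ka kb p (sa sb : {set 'I_n})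
    (Qa : 'M[R]_(n, ka)) (Qb : 'M[R]_(n, kb)) (Xa Xb : 'M[R]_(n, p)) :
  supported sa Qa -> supported sa Xa -> supported sb Qb -> supported sb Xb ->
  [disjoint sa & sb] ->
  proj_err (row_mx Qa Qb) (Xa + Xb) = proj_err Qa Xa + proj_err Qb Xb.
Proof.
move=> sQa sXa sQb sXb sab; have sba : [disjoint sb & sa] by rewrite disjoint_sym.
have QaXb : Qa^T *m Xb = 0 := supported_disjoint_orth sQa sXb sab.
have QbXa : Qb^T *m Xa = 0 := supported_disjoint_orth sQb sXa sba.
rewrite /proj_err tr_row_mx mul_row_col mulmxDl -!mulmxA !mulmxDr QaXb QbXa.
rewrite !mulmx0 addr0 add0r opprD addrACA frob2D_orth ?mulmxA //.
by apply: (supported_disjoint_orth _ _ sab); apply: supportedB => //; do 2!apply: supported_mulmx.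
Qed.

Lemma Umx_elim n (Node : finType) (sons : Node -> option (Node * Node))
    (kt : Node -> nat) (Q : forall t, 'M[R]_(n, kt t)) t
    (P : forall q, 'M[R]_(n, q) -> Prop) :
  (forall a b, sons t = Some (a, b) -> P _ (row_mx (Q a) (Q b))) ->
  (sons t = None -> P _ 1%:M) ->
  P _ (Umx sons Q t).
Proof.
rewrite /Umx /rowdim; case: (sons t) => [[a b]|] Pnode Pleaf.
  exact: Pnode.
exact: Pleaf.
Qed.

End FrobeniusProjection.

Section NestedClusterBasis.
Variables (R : comNzRingType) (n k N : nat) (Node : finType)
  (root : Node) (lbl : Node -> {set 'I_n}) (sons : Node -> option (Node * Node)).
Hypothesis treeT : is_bin_cluster_tree sons root lbl.
Variables (V : Node -> 'M[R]_(n, k)) (E : Node -> 'M[R]_k).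
Hypothesis V_supp : forall t, supported (lbl t) (V t).
Hypothesis V_nested : forall t t', sonrel sons t t' ->
  forall i, i \in lbl t' -> row i (V t) = row i (V t' *m E t').
Variables (kt : Node -> nat) (Q : forall t, 'M[R]_(n, kt t))
  (Qh : forall t, 'M[R]_(rowdim n sons kt t, kt t))
  (Vh : forall t, 'M[R]_(rowdim n sons kt t, k)).
Hypothesis Q_supp : forall t, supported (lbl t) (Q t).
Hypothesis Qh_orthonormal : forall t, (Qh t)^T *m Qh t = 1%:M.
Hypothesis Q_def : forall t, Q t = Umx sons Q t *m Qh t.
Hypothesis Vh_def : forall t, Vh t = (Umx sons Q t)^T *m V t.
Variables (t0 : Node) (M : Node -> 'M[R]_(k, N)).
Hypothesis M_nested : forall r r', r \in sons_star sons t0 ->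
  sonrel sons r r' -> M r' = E r' *m M r.

Local Notation U := (Umx sons Q).

Lemma Umx_Q_orthonormal t : (U t)^T *m U t = 1%:M /\ (Q t)^T *m Q t = 1%:M.
Proof.
elim/(sonrel_ind treeT): t => t IH.
have UU1 : (U t)^T *m U t = 1%:M.
  apply: (Umx_elim (P := fun q (W : 'M_(n, q)) => W^T *m W = 1%:M)) => [a b tab|_].
    have [ta tb] := sonrel_sons tab.
    apply: row_mx_orthonormal; [exact: (IH _ ta).2 | exact: (IH _ tb).2 |].
    exact: supported_disjoint_orth (@Q_supp a) (@Q_supp b) (lbl_sons_disjoint treeT tab).
  by rewrite trmx1 mulmx1.
split=> //.
by rewrite Q_def trmx_mul mulmxA -(mulmxA _ _ (U t)) UU1 mulmx1 Qh_orthonormal.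
Qed.

Lemma VM_split t a b : t \in sons_star sons t0 -> sons t = Some (a, b) ->
  V t *m M t = V a *m M a + V b *m M b.
Proof.
move=> t0t tab; have [ta tb] := sonrel_sons tab.
have VM_supp r : supported (lbl r) (V r *m M r) := supported_mulmx _ (@V_supp r).
have ab := lbl_sons_disjoint treeT tab.
apply/row_matrixP=> i; rewrite linearD /=.
have [ia|iNa] := boolP (i \in lbl a).
  rewrite (VM_supp b i) ?(disjointFr ab ia) // addr0 !row_mul (V_nested ta ia).
  by rewrite row_mul -mulmxA -(M_nested t0t ta).
have [ib|iNb] := boolP (i \in lbl b).
  rewrite (VM_supp a i iNa) add0r !row_mul (V_nested tb ib).
  by rewrite row_mul -mulmxA -(M_nested t0t tb).
have iNt : i \notin lbl t by rewrite -(lbl_sons_cover treeT tab) in_setU negb_or iNa.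
by rewrite (VM_supp a i iNa) (VM_supp b i iNb) addr0 row_mul (V_supp iNt) mul0mx.
Qed.

Lemma proj_err_Q_sons t : t \in sons_star sons t0 ->
  proj_err (Q t) (V t *m M t) = proj_err (Qh t) (Vh t *m M t) +
    if sons t is Some (a, b)
    then proj_err (Q a) (V a *m M a) + proj_err (Q b) (V b *m M b) else 0.
Proof.
move=> t0t; rewrite {1}Q_def proj_err_mulmx; last exact: (Umx_Q_orthonormal t).1.
rewrite Vh_def -mulmxA; congr (_ + _).
apply: (Umx_elim (P := fun q (W : 'M_(n, q)) => proj_err W (V t *m M t) = _)).
  move=> a b tab; rewrite tab (VM_split t0t tab).
  apply: (proj_err_row_mx (@Q_supp a) _ (@Q_supp b) _ (lbl_sons_disjoint treeT tab));
  exact: supported_mulmx.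
by move=> ->; apply: proj_err1.
Qed.

Lemma proj_err_Q_sum t : t \in sons_star sons t0 ->
  proj_err (Q t) (V t *m M t) =
  \sum_(r in sons_star sons t) proj_err (Qh r) (Vh r *m M r).
Proof.
elim/(sonrel_ind treeT): t => t IH t0t; rewrite proj_err_Q_sons //.
case tab: (sons t) => [[a b]|]; last by rewrite sons_star_leaf // big_set1 addr0.
have [ta tb] := sonrel_sons tab.
by rewrite (big_sons_star_node treeT _ tab) (IH a) ?(IH b) // (sons_star_son t0t).
Qed.

End NestedClusterBasis.

Theorem mainTheorem4 (R : realFieldType) (n k N : nat) (Node : finType)
  (root : Node) (lbl : Node -> {set 'I_n}) (sons : Node -> option (Node * Node))
  (HT : is_bin_cluster_tree sons root lbl)
  (V : Node -> 'M[R]_(n, k)) (E : Node -> 'M[R]_k)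
  (HVsupp : forall t, supported (lbl t) (V t))
  (Hnest : forall t t', sonrel sons t t' ->
     forall i, i \in lbl t' -> row i (V t) = row i (V t' *m E t'))
  (kt : Node -> nat) (Q : forall t, 'M[R]_(n, kt t))
  (Qh : forall t, 'M[R]_(rowdim n sons kt t, kt t))
  (Vh : forall t, 'M[R]_(rowdim n sons kt t, k))
  (HQsupp : forall t, supported (lbl t) (Q t))
  (HQh : forall t, (Qh t)^T *m Qh t = 1%:M)
  (HQdef : forall t, Q t = @Umx n Node sons kt R Q t *m Qh t)
  (HVh : forall t, Vh t = (@Umx n Node sons kt R Q t)^T *m V t)
  (t0 : Node) (M : Node -> 'M[R]_(k, N))
  (HM : forall r r', r \in sons_star sons t0 -> sonrel sons r r' -> M r' = E r' *m M r) :
  frob2 (Q t0 *m (Q t0)^T *m V t0 *m M t0 - V t0 *m M t0)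
  = \sum_(r in sons_star sons t0)
      frob2 (Qh r *m (Qh r)^T *m Vh r *m M r - Vh r *m M r).
Proof.
have t0_t0 : t0 \in sons_star sons t0 by rewrite inE connect0.
have := proj_err_Q_sum HT HVsupp Hnest HQsupp HQh HQdef HVh HM t0_t0.
rewrite /proj_err mulmxA => ->.
by apply: eq_bigr => r _; rewrite mulmxA.
Qed.
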